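(* Let $(\mathscr{P},\mathscr{B},\mathrm{I})$ be a linear space with incidence graph $\Gamma$, and let $\varphi$ be a gain function on $\Gamma$ with gain group $G$ acting on the left on a nonempty set $\Lambda$. Let $p,q\in\mathscr{P}$, $b\in\mathscr{B}$ and $\lambda,\mu\in\Lambda$. In $\mathfrak{M}(\Gamma,\varphi)$: (1) if $p=q$, then $d(x_p,z_{q,\lambda})=1$ and $(x_p,z_{q,\lambda})$ is the unique $1$-chain from $x_p$ to $z_{q,\lambda}$; (2) if $p\ne q$, then $d(x_p,z_{q,\lambda})=3$ and there is a unique $3$-chain from $x_p$ to $z_{q,\lambda}$; (3) if $b\ \mathrm{I}\ p$ and $\mu=\varphi(bp)\cdot\lambda$, then $d(y_{b,\lambda},z_{p,\mu})=1$ and $(y_{b,\lambda},z_{p,\mu})$ is the unique $1$-chain from $y_{b,\lambda}$ to $z_{p,\mu}$; (4) if $b\ \mathrm{I}\ p$ and $\mu\ne\varphi(bp)\cdot\lambda$, then $d(y_{b,\lambda},z_{p,\mu})=3$ and there is a unique $3$-chain from $y_{b,\lambda}$ to $z_{p,\mu}$.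
   Context: An incidence structure is a triple $(\mathscr{P},\mathscr{B},\mathrm{I})$ where $\mathscr{P}$ (points) and $\mathscr{B}$ (lines) are nonempty disjoint sets and $\mathrm{I}\subseteq\mathscr{P}\times\mathscr{B}$ is a nonempty incidence relation; write $p\ \mathrm{I}\ b$ when $(p,b)\in\mathrm{I}$. It is a linear space if any two distinct points are incident with exactly one common line, each line is incident with at least two points, and some point and line are not incident. The incidence graph $\Gamma$ is the bipartite graph with vertex set $\mathscr{P}\cup\mathscr{B}$ and an edge $bp$ for each incident pair; every edge is oriented from its line to its point. A gain function with gain group $G$ assigns to each edge $e$ an element $\varphi(e)\in G$. The group $G$ acts on $\Lambda$ on the left. Construction $\mathfrak{M}(\Gamma,\varphi)$: the incidence structure whose points are the formal symbols $x_p$ ($p\in\mathscr{P}$) and $y_{b,\lambda}$ ($b\in\mathscr{B},\lambda\in\Lambda$), whose lines are the formal symbols $z_{p,\lambda}$ ($p\in\mathscr{P},\lambda\in\Lambda$), and whose incidences are exactly: $x_p$ incident with $z_{p,\lambda}$ for all $\lambda$, and $y_{b,\lambda}$ incident with $z_{p,\mu}$ whenever $b\ \mathrm{I}\ p$ and $\mu=\varphi(bp)\cdot\lambda$. A $k$-chain is a sequence $(u_0,\dots,u_k)$ of points/lines with $u_i$ incident with $u_{i-1}$ for $1\le i\le k$; $d(u,v)$ is the least $k$ such that a $k$-chain from $u$ to $v$ exists ($\infty$ if none). *)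

From Stdlib Require Import List.
Import ListNotations.
Set Implicit Arguments.

Definition is_incidence_structure (P B : Type) (I : P -> B -> Prop) : Prop :=
  inhabited P /\ inhabited B /\ (exists p b, I p b).

Definition is_linear_space (P B : Type) (I : P -> B -> Prop) : Prop :=
  is_incidence_structure I /\
  (forall p q : P, p <> q -> exists! b : B, I p b /\ I q b) /\
  (forall b : B, exists p q : P, p <> q /\ I p b /\ I q b) /\
  (exists (p : P) (b : B), ~ I p b).

Definition is_group (G : Type) (mul : G -> G -> G) (one : G) (inv : G -> G) : Prop :=
  (forall x y z, mul x (mul y z) = mul (mul x y) z) /\
  (forall x, mul one x = x) /\ (forall x, mul x one = x) /\
  (forall x, mul (inv x) x = one) /\ (forall x, mul x (inv x) = one).

Definition is_left_action (G L : Type) (mul : G -> G -> G) (one : G)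
  (act : G -> L -> L) : Prop :=
  (forall l, act one l = l) /\
  (forall g h l, act (mul g h) l = act g (act h l)).

Definition inc_elt (P B : Type) (I : P -> B -> Prop) (u v : P + B) : Prop :=
  match u, v with
  | inl p, inr b => I p b
  | inr b, inl p => I p b
  | _, _ => False
  end.

Fixpoint walk (E : Type) (adj : E -> E -> Prop) (u : E) (s : list E) (v : E) : Prop :=
  match s with
  | [] => u = v
  | w :: s' => adj u w /\ walk adj w s' v
  end.

Definition is_chain (P B : Type) (I : P -> B -> Prop) (k : nat) (u v : P + B)
  (c : list (P + B)) : Prop :=
  exists s, c = u :: s /\ length s = k /\ walk (inc_elt I) u s v.

Definition dist_is (P B : Type) (I : P -> B -> Prop) (u v : P + B) (k : nat) : Prop :=
  (exists c, is_chain I k u v c) /\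
  (forall j c, is_chain I j u v c -> k <= j).

Section M.
Variables (P B G L : Type) (I : P -> B -> Prop) (phi : B -> P -> G)
  (act : G -> L -> L).

Inductive Mpoint : Type :=
  | Mx : P -> Mpoint
  | My : B -> L -> Mpoint.

Inductive Mline : Type :=
  | Mz : P -> L -> Mline.

Definition MI (u : Mpoint) (z : Mline) : Prop :=
  match u, z with
  | Mx p, Mz q _ => p = q
  | My b l, Mz p m => I p b /\ m = act (phi b p) l
  end.
End M.

Arguments Mx {P B L}.
Arguments My {P B L}.
Arguments Mz {P L}.

(** Chains alternate points and lines, so a non-incident point-line pair is at distance
    at least 3.  A 3-chain from x_p to z_{q,λ} (p ≠ q) must pass through some y_{c,ν} with
    c the line joining p and q and φ(cq)·ν = λ; c is unique by the linear-space axiom and ν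
    because G acts by bijections.  A 3-chain from y_{b,λ} to z_{p,μ} passes either through
    x_p or through some y_{c,ν}; the latter would force c = b and ν = λ, hence
    μ = φ(bp)·λ. *)

From Stdlib Require Import List Lia.
Import ListNotations.
Set Implicit Arguments.

Lemma left_action_inv_r (G L : Type) (mul : G -> G -> G) (one : G) (inv : G -> G)
  (act : G -> L -> L) :
  is_group mul one inv -> is_left_action mul one act ->
  forall g l, act g (act (inv g) l) = l.
Proof.
  intros (_ & _ & _ & _ & mulgV) (act1 & actM) g l.
  now rewrite <- actM, mulgV, act1.
Qed.

Lemma left_action_inj (G L : Type) (mul : G -> G -> G) (one : G) (inv : G -> G)
  (act : G -> L -> L) :
  is_group mul one inv -> is_left_action mul one act ->
  forall g l l', act g l = act g l' -> l = l'.
Proof.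
  intros (_ & _ & _ & mulVg & _) (act1 & actM) g l l' E.
  now rewrite <- (act1 l), <- (act1 l'), <- (mulVg g), !actM, E.
Qed.

Section Chains.
Variables (P B : Type) (I : P -> B -> Prop).

Lemma inc_elt_irrefl (u : P + B) : ~ inc_elt I u u.
Proof. now destruct u. Qed.

Lemma is_chain_1 (u v : P + B) c :
  is_chain I 1 u v c <-> c = [u; v] /\ inc_elt I u v.
Proof.
  split.
  - intros (s & -> & len & w).
    destruct s as [|w1 [|]]; try discriminate.
    now destruct w as (uw1 & <-).
  - intros (-> & uv). now exists [v].
Qed.

Lemma incident_is_chain_1 (u v : P + B) c :
  inc_elt I u v -> is_chain I 1 u v c <-> c = [u; v].
Proof. rewrite is_chain_1. tauto. Qed.

Lemma dist_is_1 (u v : P + B) : inc_elt I u v -> dist_is I u v 1.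
Proof.
  intros uv; split.
  - exists [u; v]. now apply is_chain_1.
  - intros [|j] c (s & _ & len & w); [|lia].
    destruct s; [|discriminate].
    simpl in w; subst v. now destruct (inc_elt_irrefl _ uv).
Qed.

Lemma dist_is_3_point_line (p : P) (b : B) c :
  is_chain I 3 (inl p) (inr b) c -> ~ I p b -> dist_is I (inl p) (inr b) 3.
Proof.
  intros chain pb; split; [now exists c|].
  intros j c' (s & _ & len & w).
  destruct s as [|w1 [|w2 [|w3 s]]]; simpl in len, w; try lia.
  - discriminate.
  - destruct w as (pb' & ->). contradiction.
  - destruct w as (pw1 & w1w2 & ->). now destruct w1.
Qed.

Lemma is_chain_3_point_line (p : P) (b : B) c :
  is_chain I 3 (inl p) (inr b) c <->
  exists b1 p2, c = [inl p; inr b1; inl p2; inr b] /\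
    I p b1 /\ I p2 b1 /\ I p2 b.
Proof.
  split.
  - intros (s & -> & len & walk3).
    destruct s as [|w1 [|w2 [|w3 [|]]]]; try discriminate.
    simpl in walk3; destruct walk3 as (pw1 & w1w2 & w2w3 & ->).
    destruct w1 as [|b1], w2 as [p2|]; try contradiction.
    now exists b1, p2.
  - intros (b1 & p2 & -> & pb1 & p2b1 & p2b).
    eexists; repeat split; eauto.
Qed.

End Chains.

Section Construction.
Variables (P B G L : Type) (I : P -> B -> Prop) (phi : B -> P -> G) (act : G -> L -> L).
Hypothesis line_unique : forall p q : P, p <> q -> exists! b : B, I p b /\ I q b.
Hypothesis act_inj : forall g l l', act g l = act g l' -> l = l'.
Hypothesis act_surj : forall g l, exists n, act g n = l.

Notation MIinc := (MI I phi act).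
Notation x p := (@inl (Mpoint P B L) (Mline P L) (Mx p)).
Notation y b l := (@inl (Mpoint P B L) (Mline P L) (My b l)).
Notation z p l := (@inr (Mpoint P B L) (Mline P L) (Mz p l)).

Lemma chain3_x_z_iff (p q : P) (l : L) c : p <> q ->
  is_chain MIinc 3 (x p) (z q l) c <->
  exists b n, I p b /\ I q b /\ act (phi b q) n = l /\
    c = [x p; z p (act (phi b p) n); y b n; z q l].
Proof.
  intros pq; rewrite is_chain_3_point_line; split.
  - intros ([r mu] & [r'|b n] & -> & inc1 & inc2 & inc3); simpl in inc1, inc2, inc3; subst r.
    + exfalso; congruence.
    + destruct inc2 as (pb & ->), inc3 as (qb & ->).
      now exists b, n.
  - intros (b & n & pb & qb & <- & ->).
    eexists _, _; split; [reflexivity|]. simpl; auto.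
Qed.

Lemma chain3_x_z_unique (p q : P) (l : L) : p <> q ->
  exists! c, is_chain MIinc 3 (x p) (z q l) c.
Proof.
  intros pq.
  destruct (line_unique pq) as (b & (pb & qb) & b_unique).
  destruct (act_surj (phi b q) l) as (n & bn).
  exists [x p; z p (act (phi b p) n); y b n; z q l]; split.
  - apply chain3_x_z_iff; eauto 6.
  - intros c chain.
    apply chain3_x_z_iff in chain as (b' & n' & pb' & qb' & bn' & ->); [|assumption].
    assert (b = b') as <- by auto.
    assert (n = n') as <- by (apply (@act_inj (phi b q)); congruence).
    reflexivity.
Qed.

Lemma chain3_y_z_iff (p : P) (b : B) (l m : L) c :
  I p b -> m <> act (phi b p) l ->
  is_chain MIinc 3 (y b l) (z p m) c <->
  c = [y b l; z p (act (phi b p) l); x p; z p m].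
Proof.
  intros pb m_off; rewrite is_chain_3_point_line; split.
  - intros ([r mu] & [r'|b' n] & -> & (rb & ->) & inc2 & inc3); simpl in inc2, inc3.
    + now subst r r'.
    + exfalso.
      destruct inc2 as (rb' & mu_eq), inc3 as (pb' & ->).
      assert (rp : r <> p) by (intros ->; congruence).
      destruct (line_unique rp) as (b0 & _ & b0_unique).
      assert (b0 = b) as -> by auto.
      assert (b = b') as <- by auto.
      apply m_off; f_equal. now apply (@act_inj (phi b r)).
  - intros ->. eexists _, _; split; [reflexivity|]. simpl; auto.
Qed.

End Construction.

Theorem lemma3 (P B : Type) (I : P -> B -> Prop) (HI : is_linear_space I)
  (G : Type) (mul : G -> G -> G) (one : G) (inv : G -> G)
  (HG : is_group mul one inv)
  (L : Type) (act : G -> L -> L) (Hact : is_left_action mul one act)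
  (HL : inhabited L)
  (phi : B -> P -> G)
  (p q : P) (b : B) (l m : L) :
  let MIinc := MI (B := B) I phi act in
  let x := fun r : P => @inl (Mpoint P B L) (Mline P L) (Mx r) in
  let y := fun (c : B) (n : L) => @inl (Mpoint P B L) (Mline P L) (My c n) in
  let z := fun (r : P) (n : L) => @inr (Mpoint P B L) (Mline P L) (Mz r n) in
  (p = q ->
     dist_is MIinc (x p) (z q l) 1 /\
     (forall c, is_chain MIinc 1 (x p) (z q l) c <-> c = [x p; z q l])) /\
  (p <> q ->
     dist_is MIinc (x p) (z q l) 3 /\
     (exists! c, is_chain MIinc 3 (x p) (z q l) c)) /\
  (I p b -> m = act (phi b p) l ->
     dist_is MIinc (y b l) (z p m) 1 /\
     (forall c, is_chain MIinc 1 (y b l) (z p m) c <-> c = [y b l; z p m])) /\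
  (I p b -> m <> act (phi b p) l ->
     dist_is MIinc (y b l) (z p m) 3 /\
     (exists! c, is_chain MIinc 3 (y b l) (z p m) c)).
Proof.
  intros MIinc x y z.
  destruct HI as (_ & line_unique & _).
  pose proof (left_action_inj HG Hact) as act_inj.
  assert (act_surj : forall g l, exists n, act g n = l)
    by (intros g l'; exists (act (inv g) l'); exact (left_action_inv_r HG Hact g l')).
  split; [|split; [|split]].
  - intros <-.
    assert (inc : inc_elt MIinc (x p) (z p l)) by reflexivity.
    split; [now apply dist_is_1|]. intros c. now apply incident_is_chain_1.
  - intros pq.
    pose proof (chain3_x_z_unique I phi act line_unique act_inj act_surj l pq) as unique.
    split; [|exact unique].
    destruct unique as (c & chain & _).
    now apply (dist_is_3_point_line chain).
  - intros pb ->.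
    assert (inc : inc_elt MIinc (y b l) (z p (act (phi b p) l))) by now split.
    split; [now apply dist_is_1|]. intros c. now apply incident_is_chain_1.
  - intros pb m_off.
    pose proof (fun c => chain3_y_z_iff I phi act line_unique act_inj p b l c pb m_off)
      as chain_iff.
    assert (chain : is_chain MIinc 3 (y b l) (z p m)
                      [y b l; z p (act (phi b p) l); x p; z p m]) by now apply chain_iff.
    split.
    + apply (dist_is_3_point_line chain). simpl. tauto.
    + exists [y b l; z p (act (phi b p) l); x p; z p m]. split; [exact chain|].
      intros c other. symmetry. now apply chain_iff.
Qed.
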